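(* In the setting described in the context, for every node deployment $\mathbf{P}$, every cell partitioning $\mathbf{W}$ and every normalized flow matrix $\mathbf{S}$, $$\mathcal{D}(\mathbf{P},\mathbf{W},\mathbf{S})\ \ge\ \mathcal{D}\big(\mathbf{P},\mathcal{V}(\mathbf{P},\mathbf{S}),\mathbf{S}\big),$$ where $\mathcal{V}(\mathbf{P},\mathbf{S})$ is the generalized Voronoi diagram.
   Context: Let $\Omega\subset\mathbb{R}^2$ be a convex polygon (including its interior). Let $N,M\ge1$ be integers; $\mathcal{I_A}=\{1,\dots,N\}$ (access points, APs), $\mathcal{I_F}=\{N+1,\dots,N+M\}$ (fusion centers, FCs). A node deployment is $\mathbf{P}=(p_1,\dots,p_{N+M})$ with $p_n\in\Omega$. Let $f:\Omega\to\mathbb{R}^+$ be continuous and differentiable and $R_b>0$ a constant. A cell partitioning $\mathbf{W}=(W_1,\dots,W_N)$ is a partition of $\Omega$ into Borel sets; $v(W_n)=\int_{W_n}f(\omega)d\omega$. A normalized flow matrix $\mathbf{S}=[s_{i,j}]$, $i\in\mathcal{I_A}$, $j\in\mathcal{I_A}\cup\mathcal{I_F}$, satisfies $s_{i,j}\in[0,1]$, $\sum_{j=1}^{N+M}s_{i,j}=1$ for each $i$, and has no cycles: whenever $\prod_{k=1}^K s_{l_{k-1},l_k}>0$ then $s_{l_K,l_0}=0$ (in particular $s_{i,i}=0$). The flows $F_{i,j}(\mathbf{W},\mathbf{S})$ are the unique numbers with $F_{i,j}=s_{i,j}F_i$, where $F_i=\sum_{j=1}^{N+M}F_{i,j}=R_bv(W_i)+\sum_{j=1}^NF_{j,i}$.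 Positive constants $\eta_n$ ($n\in\mathcal{I_A}$), $\beta_{i,j}$ ($i\in\mathcal{I_A}$, $j\in\mathcal{I_A}\cup\mathcal{I_F}$), nonnegative constants $\rho_n$ ($n\in\mathcal{I_A}$) and $\lambda\ge0$ are given. The total communication power is $$\mathcal{D}(\mathbf{P},\mathbf{W},\mathbf{S})=\sum_{n=1}^N\int_{W_n}\eta_n\|p_n-\omega\|^2R_bf(\omega)d\omega+\lambda\Big[\sum_{i=1}^N\sum_{j=1}^{N+M}\beta_{i,j}\|p_i-p_j\|^2F_{i,j}+\sum_{n=1}^N\rho_n\Big(\sum_{i=1}^NF_{i,n}+R_bv(W_n)\Big)\Big].$$ AP power coefficient: for $n\in\mathcal{I_A}$, summing over all directed paths $L:n=l_0\to\cdots\to l_J$ with $l_0,\dots,l_{J-1}\in\mathcal{I_A}$, $l_J\in\mathcal{I_F}$, $\prod_i s_{l_{i-1},l_i}>0$, $g_n(\mathbf{P},\mathbf{S})=\sum_L\prod_{i=1}^Js_{l_{i-1},l_i}\big(\sum_{j=1}^J\beta_{l_{j-1},l_j}\|p_{l_{j-1}}-p_{l_j}\|^2+\sum_{j=1}^{J-1}\rho_{l_j}\big)$. Generalized Voronoi diagram: $\mathcal{V}(\mathbf{P},\mathbf{S})=(\mathcal{V}_1,\dots,\mathcal{V}_N)$ with $\mathcal{V}_n=\{\omega\in\Omega:\eta_n\|p_n-\omega\|^2+\lambda g_n(\mathbf{P},\mathbf{S})+\lambda\rho_n\le\eta_k\|p_k-\omega\|^2+\lambda g_k(\mathbf{P},\mathbf{S})+\lambda\rho_k\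 \forall k\ne n\}$, with ties broken in favor of the smaller index (so the $\mathcal{V}_n$ form a Borel partition of $\Omega$). *)

From mathcomp Require Import all_boot all_order all_algebra.
From mathcomp Require Import all_classical all_reals all_analysis.
Import Order.TTheory GRing.Theory Num.Theory.
Set Implicit Arguments. Unset Strict Implicit. Unset Printing Implicit Defensive.
Import numFieldNormedType.Exports.
Local Open Scope ring_scope.
Local Open Scope classical_set_scope.

(* The plane R^2 as a measurable space: product of the Borel sigma-algebras
   of R (= Borel sigma-algebra of R^2). *)
Notation plane R := (measurableTypeR R * measurableTypeR R)%type.

Definition leb2 (R : realType) : set (plane R) -> \bar R :=
  ((@lebesgue_measure R) \x (@lebesgue_measure R))%E.

Definition sqd (R : realType) (x y : R * R) : R :=
  (x.1 - y.1) ^+ 2 + (x.2 - y.2) ^+ 2.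

Definition convex_hull (R : realType) (vs : seq (R * R)) : set (R * R) :=
  [set x | exists lam : nat -> R,
     (forall i, 0 <= lam i) /\ \sum_(i < size vs) lam i = 1 /\
     x = (\sum_(i < size vs) lam i * (nth (0, 0) vs i).1,
          \sum_(i < size vs) lam i * (nth (0, 0) vs i).2)].

(* a (non-degenerate) convex polygon, including its interior *)
Definition convex_polygon (R : realType) (Om : set (R * R)) : Prop :=
  exists vs : seq (R * R), Om = convex_hull vs /\
    exists a b c, a \in vs /\ b \in vs /\ c \in vs /\
      (b.1 - a.1) * (c.2 - a.2) - (b.2 - a.2) * (c.1 - a.1) != 0.

(* nodes: inl i = access point i (i < N), inr j = fusion center j (j < M) *)
Definition node (N M : nat) := ('I_N + 'I_M)%type.

Definition isAP (N M : nat) (a : node N M) : bool :=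
  if a is inl _ then true else false.
Definition isFC (N M : nat) (a : node N M) : bool :=
  if a is inr _ then true else false.

Definition extm (R : realType) (N M : nat) (s : 'I_N -> node N M -> R)
  (a b : node N M) : R := if a is inl i then s i b else 0.
Definition extv (R : realType) (N M : nat) (r : 'I_N -> R) (a : node N M) : R :=
  if a is inl i then r i else 0.

Definition cell_partition (R : realType) (N : nat) (Om : set (R * R))
  (W : 'I_N -> set (plane R)) : Prop :=
  (forall n, measurable (W n)) /\
  (forall n m, n != m -> W n `&` W m = set0) /\
  (forall x, Om x <-> exists n, W n x).

Definition normalized_flow (R : realType) (N M : nat)
  (s : 'I_N -> node N M -> R) : Prop :=
  (forall i j, 0 <= s i j <= 1) /\
  (forall i, \sum_(j : node N M) s i j = 1) /\
  (forall (K : nat) (l : nat -> 'I_N),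
     0 < \prod_(k < K) s (l k) (inl (l k.+1)) -> s (l K) (inl (l 0%N)) = 0).

Definition vol (R : realType) (f : R * R -> R) (A : set (plane R)) : R :=
  Rintegral (@leb2 R) A f.

Definition is_flow (R : realType) (N M : nat) (Rb : R) (f : R * R -> R)
  (W : 'I_N -> set (plane R)) (s : 'I_N -> node N M -> R)
  (F : 'I_N -> node N M -> R) : Prop :=
  (forall i, \sum_(j : node N M) F i j = Rb * vol f (W i) + \sum_(k < N) F k (inl i)) /\
  (forall i j, F i j = s i j * \sum_(j' : node N M) F i j').

Definition Dpow (R : realType) (N M : nat) (Rb : R) (f : R * R -> R)
  (eta : 'I_N -> R) (beta : 'I_N -> node N M -> R) (rho : 'I_N -> R) (lam : R)
  (p : node N M -> R * R) (W : 'I_N -> set (plane R))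
  (F : 'I_N -> node N M -> R) : R :=
  \sum_(n < N) Rintegral (@leb2 R) (W n)
                 (fun w => eta n * sqd (p (inl n)) w * Rb * f w)
  + lam * (\sum_(i < N) \sum_(j : node N M) beta i j * sqd (p (inl i)) (p j) * F i j
           + \sum_(n < N) rho n * (\sum_(i < N) F i (inl n) + Rb * vol f (W n))).

Definition path_ok (R : realType) (N M : nat) (s : 'I_N -> node N M -> R)
  (n : 'I_N) (J : nat) (l : {ffun 'I_J.+1 -> node N M}) : bool :=
  [&& l ord0 == inl n,
      [forall k : 'I_J, isAP (l (widen_ord (leqnSn J) k))],
      isFC (l ord_max) &
      0 < \prod_(k < J) extm s (l (widen_ord (leqnSn J) k)) (l (lift ord0 k))].

(* AP power coefficient g_n(P, S).  Since S has no cycles, a path with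
   positive probability visits each AP at most once, so J <= N. *)
Definition gcoef (R : realType) (N M : nat) (beta : 'I_N -> node N M -> R)
  (rho : 'I_N -> R) (p : node N M -> R * R) (s : 'I_N -> node N M -> R)
  (n : 'I_N) : R :=
  \sum_(J < N.+1 | (0 < J)%N)
    \sum_(l : {ffun 'I_J.+1 -> node N M} | path_ok s n l)
      (\prod_(k < J) extm s (l (widen_ord (leqnSn J) k)) (l (lift ord0 k))) *
      (\sum_(k < J) extm beta (l (widen_ord (leqnSn J) k)) (l (lift ord0 k)) *
                    sqd (p (l (widen_ord (leqnSn J) k))) (p (l (lift ord0 k)))
       + \sum_(k < J | (0 < k)%N) extv rho (l (widen_ord (leqnSn J) k))).

Definition vcost (R : realType) (N M : nat) (eta : 'I_N -> R)
  (beta : 'I_N -> node N M -> R) (rho : 'I_N -> R) (lam : R)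
  (p : node N M -> R * R) (s : 'I_N -> node N M -> R) (n : 'I_N) (w : R * R) : R :=
  eta n * sqd (p (inl n)) w + lam * gcoef beta rho p s n + lam * rho n.

(* generalized Voronoi diagram, ties broken in favour of the smaller index *)
Definition voronoi (R : realType) (N M : nat) (Om : set (R * R)) (eta : 'I_N -> R)
  (beta : 'I_N -> node N M -> R) (rho : 'I_N -> R) (lam : R)
  (p : node N M -> R * R) (s : 'I_N -> node N M -> R) (n : 'I_N) : set (plane R) :=
  [set w | Om w /\ forall k : 'I_N,
     ((k < n)%N -> vcost eta beta rho lam p s n w < vcost eta beta rho lam p s k w) /\
     ((n < k)%N -> vcost eta beta rho lam p s n w <= vcost eta beta rho lam p s k w)].

(* For fixed nodes and flow matrix, the network part of the power is linear in
   the traffic generated at each access point: by the flow balance it equals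
   the sum over n of (g_n + rho_n) Rb v(W_n).  This rests on the one-step
   recursion g_i = sum_j s_ij (beta_ij |p_i - p_j|^2 + [j is an AP] (rho_j + g_j))
   for the path expansion of g, which holds because acyclicity of S bounds the
   length of every path of positive probability by N.  Hence D(P, W, S) is the
   sum over n of the integral over W_n of the generalized Voronoi cost
   eta_n |p_n - w|^2 + lambda g_n + lambda rho_n against the weight Rb f >= 0,
   and assigning every point to a cell of least cost can only decrease it. *)

From mathcomp Require Import all_boot all_order all_algebra.
From mathcomp Require Import all_classical all_reals all_analysis.
From mathcomp Require Import zify ring lra.
Import Order.TTheory GRing.Theory Num.Theory.
Import numFieldNormedType.Exports.
Local Open Scope ring_scope.
Local Open Scope classical_set_scope.
Set Implicit Arguments. Unset Strict Implicit. Unset Printing Implicit Defensive.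

Section Walks.
Variables (R : realType) (T : finType).
Implicit Types (A c : T -> T -> R) (h : T -> R).

Definition path_prod A J (l : {ffun 'I_J.+1 -> T}) : R :=
  \prod_(k < J) A (l (widen_ord (leqnSn J) k)) (l (lift ord0 k)).

Definition path_sum c J (l : {ffun 'I_J.+1 -> T}) : R :=
  \sum_(k < J) c (l (widen_ord (leqnSn J) k)) (l (lift ord0 k)).

Fixpoint walk_weight A J h a : R :=
  if J is J'.+1 then \sum_b A a b * walk_weight A J' h b else h a.

Fixpoint walk_cost A c J h a : R :=
  if J is J'.+1 then \sum_b A a b * (c a b * walk_weight A J' h b + walk_cost A c J' h b)
  else 0.

Lemma walk_weightS A J h a :
  walk_weight A J.+1 h a = \sum_b A a b * walk_weight A J h b.
Proof. by []. Qed.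

Lemma walk_costS A c J h a :
  walk_cost A c J.+1 h a = \sum_b A a b * (c a b * walk_weight A J h b + walk_cost A c J h b).
Proof. by []. Qed.

Definition pcons J (a : T) (l : {ffun 'I_J.+1 -> T}) : {ffun 'I_J.+2 -> T} :=
  [ffun k => if unlift ord0 k is Some k' then l k' else a].

Lemma pcons0 J a (l : {ffun 'I_J.+1 -> T}) : pcons a l ord0 = a.
Proof. by rewrite ffunE unlift_none. Qed.

Lemma pcons_lift J a (l : {ffun 'I_J.+1 -> T}) k : pcons a l (lift ord0 k) = l k.
Proof. by rewrite ffunE liftK. Qed.

Lemma pcons_max J a (l : {ffun 'I_J.+1 -> T}) : pcons a l ord_max = l ord_max.
Proof. by rewrite -(pcons_lift a l); congr (pcons a l _); apply: val_inj. Qed.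

Lemma widen_ord0 J : widen_ord (leqnSn J.+1) ord0 = ord0 :> 'I_J.+2.
Proof. exact: val_inj. Qed.

Lemma widen_lift0 J (k : 'I_J) :
  widen_ord (leqnSn J.+1) (lift ord0 k) = lift ord0 (widen_ord (leqnSn J) k).
Proof. exact: val_inj. Qed.

Lemma path_prod_cons A J a (l : {ffun 'I_J.+1 -> T}) :
  path_prod A (pcons a l) = A a (l ord0) * path_prod A l.
Proof.
rewrite /path_prod big_ord_recl widen_ord0 pcons0 pcons_lift.
by congr (_ * _); apply: eq_bigr => k _; rewrite widen_lift0 !pcons_lift.
Qed.

Lemma path_sum_cons c J a (l : {ffun 'I_J.+1 -> T}) :
  path_sum c (pcons a l) = c a (l ord0) + path_sum c l.
Proof.
rewrite /path_sum big_ord_recl widen_ord0 pcons0 pcons_lift.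
by congr (_ + _); apply: eq_bigr => k _; rewrite widen_lift0 !pcons_lift.
Qed.

Lemma sum_pcons J a (F : {ffun 'I_J.+2 -> T} -> R) :
  \sum_(l : {ffun 'I_J.+2 -> T} | l ord0 == a) F l =
  \sum_(l : {ffun 'I_J.+1 -> T}) F (pcons a l).
Proof.
pose behead (l : {ffun 'I_J.+2 -> T}) := [ffun k => l (lift ord0 k)].
rewrite (reindex_onto (@pcons J a) behead) => [|l /eqP <-]; last first.
  apply/ffunP => k; rewrite ffunE; case: (unliftP ord0 k) => [j ->|->] //.
  by rewrite ffunE.
apply: eq_bigl => l; rewrite pcons0 eqxx /=; apply/eqP/ffunP => k.
by rewrite ffunE pcons_lift.
Qed.

Lemma sum_path1 a (F : {ffun 'I_1 -> T} -> R) :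
  \sum_(l : {ffun 'I_1 -> T} | l ord0 == a) F l = F [ffun => a].
Proof.
apply: big_pred1 => l /=; apply/eqP/eqP => [<-|->]; last by rewrite ffunE.
by apply/ffunP => i; rewrite ffunE (ord1 i).
Qed.

Lemma walk_weightE A J h a :
  \sum_(l : {ffun 'I_J.+1 -> T} | l ord0 == a) path_prod A l * h (l ord_max) =
  walk_weight A J h a.
Proof.
elim: J a => [|J IH] a; first by rewrite sum_path1 /path_prod big_ord0 mul1r ffunE.
rewrite sum_pcons (partition_big (fun l : {ffun 'I_J.+1 -> T} => l ord0) xpredT) //=.
apply: eq_bigr => b _; rewrite -IH mulr_sumr; apply: eq_bigr => l /eqP <-.
by rewrite path_prod_cons pcons_max mulrA.
Qed.

Lemma walk_costE A c J h a :
  \sum_(l : {ffun 'I_J.+1 -> T} | l ord0 == a) path_prod A l * path_sum c l * h (l ord_max) =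
  walk_cost A c J h a.
Proof.
elim: J a => [|J IH] a; first by rewrite sum_path1 /path_sum big_ord0 mulr0 mul0r.
rewrite sum_pcons (partition_big (fun l : {ffun 'I_J.+1 -> T} => l ord0) xpredT) //=.
apply: eq_bigr => b _; rewrite -IH -walk_weightE mulrDr !mulr_sumr -big_split /=.
apply: eq_bigr => l /eqP <-; rewrite path_prod_cons path_sum_cons pcons_max; ring.
Qed.

End Walks.

Section AcyclicFlow.
Variables (R : realType) (N M : nat) (s : 'I_N -> node N M -> R).
Hypothesis hs : normalized_flow s.

Definition AP_ind (a : node N M) : R := (isAP a)%:R.
Definition FC_ind (a : node N M) : R := (isFC a)%:R.

Lemma AP_ind_ge0 a : 0 <= AP_ind a.
Proof. exact: ler0n. Qed.

Lemma extm_ge0 a b : 0 <= extm s a b.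
Proof. by case: a => //= i; case/andP: (proj1 hs i b). Qed.

Lemma extm_row_sum a : \sum_b extm s a b = AP_ind a.
Proof. by case: a => [i|j] /=; [rewrite (proj1 (proj2 hs)) | rewrite big1]. Qed.

Lemma walk_weight_ge0 J h : (forall a, 0 <= h a) -> forall a, 0 <= walk_weight (extm s) J h a.
Proof.
move=> h0; elim: J => [|J IH] a //=.
by apply: sumr_ge0 => b _; rewrite mulr_ge0 ?extm_ge0.
Qed.

(* The rows of [extm s] at fusion centers vanish: walks are absorbed there. *)
Lemma walk_absorption K a :
  \sum_(J < K.+1) walk_weight (extm s) J FC_ind a + walk_weight (extm s) K AP_ind a = 1.
Proof.
have FC_AP b : FC_ind b + AP_ind b = 1 by case: b => b; rewrite /FC_ind /AP_ind /= ?addr0 ?add0r.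
elim: K a => [|K IH] a; first by rewrite big_ord1 FC_AP.
rewrite big_ord_recl; under eq_bigr do rewrite lift0.
rewrite /= exchange_big -addrA -big_split /=.
under eq_bigr do rewrite -mulr_sumr -mulrDr IH mulr1.
by rewrite extm_row_sum FC_AP.
Qed.

Lemma walk_weight_AP_chain K a : walk_weight (extm s) K AP_ind a != 0 ->
  exists l : nat -> 'I_N,
    a = inl (l 0%N) /\ forall k, (k < K)%N -> 0 < s (l k) (inl (l k.+1)).
Proof.
elim: K a => [|K IH] a; first by case: a => [i _|j]; [exists (fun=> i) | rewrite /AP_ind eqxx].
move=> /eqP /psumr_neq0P [b _|b /=]; first exact: mulr_ge0 (extm_ge0 a b) (walk_weight_ge0 K AP_ind_ge0 b).
rewrite lt_def mulf_eq0 negb_or => /andP[/andP[sab /IH [l [bl Hl]]] _].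
case: a sab => [i|j] /= sab; last by rewrite eqxx in sab.
exists (fun k => if k is k'.+1 then l k' else i); split => // -[|k] Hk /=; last exact: Hl.
by rewrite -bl lt_def sab (extm_ge0 (inl i) b).
Qed.

(* Pigeonhole: [N] positive steps visit some access point twice, and the
   steps in between form a cycle of positive probability. *)
Lemma no_AP_chain (l : nat -> 'I_N) :
  ~ (forall k, (k < N)%N -> 0 < s (l k) (inl (l k.+1))).
Proof.
move=> Hl.
have no_repeat a b : (a < b <= N)%N -> l a <> l b.
  move=> /andP[ab bN] lab.
  have := proj2 (proj2 hs) (b - a - 1)%N (fun k => l (a + k)%N).
  rewrite (_ : (a + (b - a - 1) = b.-1)%N); last by lia.
  rewrite addn0 lab => cycle.
  have := Hl b.-1 ltac:(lia); rewrite prednK; last by lia.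
  rewrite cycle ?ltxx //; apply: prodr_gt0 => k _; rewrite addnS; apply: Hl.
  by have := ltn_ord k; lia.
have /injectivePn [x [y xy lxy]] : ~~ injectiveb (fun k : 'I_N.+1 => l k).
  by apply/negP => /injectiveP /leq_card; rewrite !card_ord ltnn.
case: (ltngtP x y) => [x_lt_y|y_lt_x|/val_inj exy]; last by rewrite exy eqxx in xy.
- by apply: (no_repeat x y) => //; rewrite x_lt_y -ltnS ltn_ord.
- by apply: (no_repeat y x) => //; rewrite y_lt_x -ltnS ltn_ord.
Qed.

Lemma walk_weight_AP_succ_eq0 i j :
  0 < s i (inl j) -> walk_weight (extm s) N.-1 AP_ind (inl j) = 0.
Proof.
move=> sij; apply/eqP/negP => /negP /walk_weight_AP_chain [l [[lj] Hl]].
apply: (@no_AP_chain (fun k => if k is k'.+1 then l k' else i)) => -[|k] Hk /=.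
  by rewrite -lj.
by apply: Hl; lia.
Qed.

Lemma walk_FC_eq0 c J a : walk_weight (extm s) J AP_ind a = 0 ->
  walk_weight (extm s) J.+1 FC_ind a = 0 /\ walk_cost (extm s) c J.+1 FC_ind a = 0.
Proof.
elim: J a => [|J IH] [i|j].
- by rewrite /= /AP_ind /= => /eqP; rewrite oner_eq0.
- by move=> _; split; apply: big1 => b _; rewrite mul0r.
- rewrite walk_weightS => W0.
  have {}W0 b : extm s (inl i) b = 0 \/ walk_weight (extm s) J AP_ind b = 0.
    have := psumr_eq0P (fun b _ => mulr_ge0 (extm_ge0 (inl i) b) (walk_weight_ge0 J AP_ind_ge0 b)) W0.
    by move=> /(_ b isT) /eqP; rewrite mulf_eq0 => /orP[] /eqP; [left | right].
  rewrite walk_weightS walk_costS; split; apply: big1 => b _;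
    by case: (W0 b) => [-> | /IH [E1 E2]]; rewrite ?mul0r ?E1 ?E2 ?mulr0 ?addr0 ?mulr0.
- by move=> _; split; apply: big1 => b _; rewrite mul0r.
Qed.

Lemma walk_weight_AP_inr J j : walk_weight (extm s) J AP_ind (inr j) = 0.
Proof. by case: J => [|J]; [rewrite /AP_ind | apply: big1 => b _; rewrite mul0r]. Qed.

Lemma walk_cost_inr c J h j : walk_cost (extm s) c J h (inr j) = 0.
Proof. by case: J => [|J] //; apply: big1 => b _; rewrite mul0r. Qed.

Definition cost_to_FC c a := \sum_(J < N.+1) walk_cost (extm s) c J FC_ind a.

(* A step [i -> b] of positive probability leaves at most [N - 1] further
   steps before absorption, so truncating at [N] loses nothing. *)
Lemma cost_to_FC_rec c i :
  cost_to_FC c (inl i) = \sum_b s i b * (c (inl i) b + cost_to_FC c b).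
Proof.
have N0 : (0 < N)%N := leq_ltn_trans (leq0n i) (ltn_ord i).
rewrite /cost_to_FC big_ord_recl add0r; under eq_bigr do rewrite lift0 walk_costS.
rewrite exchange_big /=; apply: eq_bigr => b _; rewrite -mulr_sumr.
have [->|sib_neq0] := eqVneq (s i b) 0; first by rewrite !mul0r.
have sib : 0 < s i b by rewrite lt_def sib_neq0 (extm_ge0 (inl i)).
congr (_ * _); rewrite big_split /= -mulr_sumr.
have absorb := walk_absorption N.-1 b; rewrite prednK // in absorb.
case: b sib_neq0 sib absorb => [j|j] _ sib absorb.
- rewrite (walk_weight_AP_succ_eq0 sib) addr0 in absorb; rewrite absorb mulr1.
  have [_ cost0] := walk_FC_eq0 c (walk_weight_AP_succ_eq0 sib); rewrite prednK // in cost0.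
  by rewrite [X in _ = _ + X]big_ord_recr /= cost0 addr0.
- rewrite walk_weight_AP_inr addr0 in absorb; rewrite absorb mulr1.
  by rewrite !big1 // => J _; rewrite walk_cost_inr.
Qed.

Variables (beta : 'I_N -> node N M -> R) (rho : 'I_N -> R) (p : node N M -> R * R).

Definition hop_cost (a b : node N M) : R := extm beta a b * sqd (p a) (p b) + extv rho b.

Lemma gcoefE n : gcoef beta rho p s n = cost_to_FC hop_cost (inl n).
Proof.
rewrite /gcoef /cost_to_FC big_mkcond; apply: eq_bigr => -[[|J] HJ] _ //.
rewrite -walk_costE big_mkcond [RHS]big_mkcond; apply: eq_bigr => l _.
case: (boolP (path_ok s n l)) => [/and4P[/eqP l0 _ lFC _]|not_ok].
  rewrite l0 eqxx /FC_ind lFC mulr1 /path_prod /path_sum big_split /=; congr (_ * (_ + _)).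
  rewrite big_mkcond big_ord_recl /= add0r [RHS]big_ord_recr /=.
  rewrite (_ : lift ord0 ord_max = ord_max); last exact: val_inj.
  case: (l ord_max) lFC => // j _; rewrite addr0.
  by apply: eq_bigr => k _; rewrite widen_lift0.
case: (eqVneq (l ord0) (inl n)) => l0 //; rewrite /FC_ind.
case lFC: (isFC (l ord_max)); last by rewrite mulr0.
suff -> : path_prod (extm s) l = 0 by rewrite !mul0r.
move: not_ok; rewrite /path_ok l0 eqxx lFC /= negb_and => /orP[/forallPn [k not_AP]|not_pos].
  by rewrite /path_prod (bigD1 k) //=; case: (l _) not_AP => //= j _; rewrite mul0r.
by apply/eqP; rewrite eq_le leNgt not_pos prodr_ge0 // => k _; exact: extm_ge0.
Qed.

Lemma gcoef_rec n : gcoef beta rho p s n =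
  \sum_j s n j * (beta n j * sqd (p (inl n)) (p j)) +
  \sum_(m < N) s n (inl m) * (gcoef beta rho p s m + rho m).
Proof.
rewrite gcoefE cost_to_FC_rec !big_sumType /=.
under [X in _ = _ + X]eq_bigr do rewrite gcoefE.
rewrite addrAC -big_split /=; congr (_ + _); apply: eq_bigr => m _.
  by rewrite /hop_cost /=; ring.
rewrite /hop_cost /= /cost_to_FC big1 => [|J _]; last exact: walk_cost_inr.
by rewrite !addr0.
Qed.

(* Telescope the recursion [gcoef_rec] along the flow balance. *)
Lemma flow_cost_identity (vv : 'I_N -> R) (F : 'I_N -> node N M -> R) :
  (forall i, \sum_j F i j = vv i + \sum_(k < N) F k (inl i)) ->
  (forall i j, F i j = s i j * \sum_j' F i j') ->
  \sum_(i < N) \sum_j beta i j * sqd (p (inl i)) (p j) * F i j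
    + \sum_(n < N) rho n * (\sum_(i < N) F i (inl n) + vv n)
  = \sum_(n < N) (gcoef beta rho p s n + rho n) * vv n.
Proof.
move=> balance split_flow.
pose out k := \sum_j F k j.
pose c k := gcoef beta rho p s k + rho k.
pose hop k := \sum_j s k j * (beta k j * sqd (p (inl k)) (p j)).
transitivity (\sum_(k < N) out k * (hop k + rho k)).
  rewrite -big_split; apply: eq_bigr => k _ /=.
  rewrite [_ + vv k]addrC -balance mulrDr [out k * rho k]mulrC /hop mulr_sumr.
  by congr (_ + _); apply: eq_bigr => j _; rewrite split_flow -/(out k); ring.
have -> : \sum_(k < N) out k * (hop k + rho k) =
    \sum_(k < N) out k * c k - \sum_(k < N) out k * \sum_(n < N) s k (inl n) * c n.
  by rewrite -sumrB; apply: eq_bigr => k _; rewrite /c /hop gcoef_rec; ring.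
have -> : \sum_(k < N) out k * \sum_(n < N) s k (inl n) * c n =
    \sum_(n < N) c n * \sum_(k < N) F k (inl n).
  under eq_bigr do rewrite mulr_sumr.
  rewrite exchange_big /=; apply: eq_bigr => n _; rewrite mulr_sumr.
  by apply: eq_bigr => k _; rewrite (split_flow k (inl n)) -/(out k); ring.
by rewrite -sumrB; apply: eq_bigr => n _; rewrite /out /c balance; ring.
Qed.

End AcyclicFlow.

Section CellIntegrals.
Context d (T : measurableType d) (R : realType) (mu : {measure set T -> \bar R}).

Lemma Rintegral_cells N (A : set T) (P : 'I_N -> set T) (g : T -> R) :
  measurable A -> (forall m, measurable (P m)) ->
  (forall m m', m != m' -> P m `&` P m' = set0) ->
  A `<=` \bigcup_m P m -> mu.-integrable A (EFin \o g) ->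
  Rintegral mu A g = \sum_(m < N) Rintegral mu (A `&` P m) g.
Proof.
move=> mA mP dP AP iA.
have AE : A = \big[setU/set0]_(m <- index_enum 'I_N) (A `&` P m).
  rewrite -bigcup_seq; apply/seteqP; split => [x Ax|x [m _ []] //].
  by have [m _ Pmx] := AP x Ax; exists m => //=; rewrite mem_index_enum.
have mAP m : measurable (A `&` P m) by exact: measurableI.
rewrite /Rintegral {1}AE integral_bigsetU_EFin //; first last.
- by rewrite -AE; exact: measurable_int iA.
- move=> i j _ _ [x [[_ Pi] [_ Pj]]]; apply/eqP; apply: contraT => ij.
  have : (P i `&` P j) x by [].
  by rewrite (dP _ _ ij).
- exact: index_enum_uniq.
rewrite (_ : \sum_(i <- _) _ = (\sum_(m < N) Rintegral mu (A `&` P m) g)%:E) //.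
rewrite -sumEFin; apply: eq_bigr => m _; rewrite fineK //.
by apply: integrable_fin_num => //; exact: integrableS iA.
Qed.

Lemma sum_Rintegral_cells_le N (W V : 'I_N -> set T) (h : 'I_N -> T -> R) :
  (forall n, measurable (W n)) -> (forall m, measurable (V m)) ->
  (forall n n', n != n' -> W n `&` W n' = set0) ->
  (forall m m', m != m' -> V m `&` V m' = set0) ->
  (forall n, W n `<=` \bigcup_m V m) -> (forall m, V m `<=` \bigcup_n W n) ->
  (forall n, mu.-integrable (W n) (EFin \o h n)) ->
  (forall m, mu.-integrable (V m) (EFin \o h m)) ->
  (forall m w, V m w -> forall n, h m w <= h n w) ->
  \sum_(m < N) Rintegral mu (V m) (h m) <= \sum_(n < N) Rintegral mu (W n) (h n).
Proof.
move=> mW mV dW dV WV VW iW iV hmin.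
rewrite (eq_bigr _ (fun m _ => Rintegral_cells (mV m) mW dW (VW m) (iV m))).
rewrite [leRHS](eq_bigr _ (fun n _ => Rintegral_cells (mW n) mV dV (WV n) (iW n))).
rewrite exchange_big /=; apply: ler_sum => n _; apply: ler_sum => m _.
rewrite setIC; have mWV := measurableI _ _ (mW n) (mV m).
apply: le_Rintegral => //; [exact: integrableS (iV m)|exact: integrableS (iW n)|].
by move=> w [_ Vw]; exact: hmin.
Qed.

End CellIntegrals.

Lemma continuous_sqd (R : realType) (q : R * R) : continuous (sqd q).
Proof.
have sq_diff (u : R * R -> R) (c : R) : continuous u -> continuous (fun w => (c - u w) ^+ 2).
  move=> cu x.
  have cB : {for x, continuous (fun w => c - u w)}.
    by apply: continuousB; [exact: cst_continuous | exact: cu].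
  exact: (continuous_comp cB (@exprn_continuous R 2 _)).
move=> x; apply: (@continuousD _ _ _ (fun w => (q.1 - w.1) ^+ 2) (fun w => (q.2 - w.2) ^+ 2)).
  by apply: sq_diff => y; exact: cvg_fst.
by apply: sq_diff => y; exact: cvg_snd.
Qed.

Lemma continuous_row_lincomb (R : realType) k (c : 'I_k -> R) :
  continuous (fun v : 'rV[R]_k => \sum_i v ord0 i * c i).
Proof.
apply: (continuous_big (op := +%R)) => [|i _ v]; first exact: add_continuous.
by apply: continuousM; [exact: coord_continuous | exact: cst_continuous].
Qed.

Lemma convex_hull_compact (R : realType) (vs : seq (R * R)) : compact (convex_hull vs).
Proof.
pose k := size vs.
pose coords (v : 'rV[R]_k) := (\sum_i v ord0 i * (nth (0, 0) vs i).1,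
                               \sum_i v ord0 i * (nth (0, 0) vs i).2).
pose cube := [set v : 'rV[R]_k | forall i, `[(0 : R), 1]%classic (v ord0 i)].
pose hyperplane := [set v : 'rV[R]_k | \sum_i v ord0 i * 1 = 1].
have simplex_compact : compact (cube `&` hyperplane).
  apply: compact_closedI; first exact: (rV_compact (fun=> @segment_compact R 0 1)).
  (* the factor [1] lets [continuous_row_lincomb] apply *)
  have := proj1 (continuous_closedP _) (@continuous_row_lincomb R k (fun=> 1)) _ (@closed_eq R 1).
  exact.
have -> : convex_hull vs = coords @` (cube `&` hyperplane).
  apply/seteqP; split => x.
    move=> [lam [lam0 [lam1 ->]]]; exists (\row_i lam i).
      split; last by rewrite /hyperplane /=; under eq_bigr do rewrite mxE mulr1.
      move=> i; rewrite /= in_itv /= mxE lam0 /= -lam1 (bigD1 i) //= lerDl.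
      exact: sumr_ge0.
    by congr pair; apply: eq_bigr => i _; rewrite mxE.
  move=> [v [cube_v hyp_v] <-].
  exists (fun j => oapp (fun i : 'I_k => v ord0 i) 0 (insub j)); split.
    by move=> j; case: insubP => //= i _ _; have /andP[] := cube_v i.
  split; last by congr pair; apply: eq_bigr => i _; rewrite valK.
  by rewrite -hyp_v; apply: eq_bigr => i _; rewrite valK mulr1.
apply: continuous_compact simplex_compact; apply: continuous_subspaceT => v.
exact: cvg_pair (@continuous_row_lincomb R k _ v) (@continuous_row_lincomb R k _ v).
Qed.

Lemma compact_plane_box (R : realType) (K : set (R * R)) : compact K ->
  exists B, forall x, K x -> `|x.1| <= B /\ `|x.2| <= B.
Proof.
move=> /compact_bounded [M [_ KM]]; exists (`|M| + 1) => x Kx.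
have /(KM _)/(_ x Kx) : M < `|M| + 1 by rewrite (le_lt_trans (ler_norm M)) ?ltrDl.
by rewrite /= prod_normE ge_max => /andP[].
Qed.

Lemma leb2_bounded_lt_oo (R : realType) (A : set (plane R)) (B : R) :
  measurable A -> (forall x, A x -> `|x.1| <= B /\ `|x.2| <= B) -> (@leb2 R A < +oo)%E.
Proof.
move=> mA AB.
pose side : set (measurableTypeR R) := `[-B, B]%classic.
have mside : measurable side by exact: measurable_itv.
apply: (@le_lt_trans _ _ (@leb2 R (side `*` side))).
  apply: le_measure; rewrite ?inE //; first exact: measurableX.
  by move=> x /AB[x1 x2]; rewrite /side /= !in_itv /= -!ler_norml.
rewrite /leb2 product_measure1E //.
change (@lebesgue_measure R [set` `[-B, B]%R] * @lebesgue_measure R [set` `[-B, B]%R] < +oo)%E.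
rewrite lebesgue_measure_itv /=; case: ifP => _; last by rewrite mul0e ltry.
by rewrite -EFinM ltry.
Qed.

(* By continuity, the trace on [D] of the preimage of an open interval is
   its trace on a union of rational open boxes, a countable union. *)
Lemma plane_continuous_measurable_fun (R : realType) (D : set (plane R)) (g : R * R -> R) :
  measurable D -> (forall x : R * R, D x -> {for x, continuous g}) ->
  measurable_fun D (g : plane R -> R).
Proof.
move=> mD cg; apply: (measurability _ (measurable_realfun.RGenOpens.measurableE R)).
move=> _ [_ [a [b ->]] <-].
pose box (q : (rat * rat) * (rat * rat)) : set (plane R) :=
  (`]ratr q.1.1, ratr q.1.2[%classic : set (measurableTypeR R)) `*`
  (`]ratr q.2.1, ratr q.2.2[%classic : set (measurableTypeR R)).
pose inside q := D `&` box q `<=` g @^-1` `]a, b[%classic.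
have -> : D `&` g @^-1` `]a, b[%classic = D `&` \bigcup_(q in inside) box q.
  apply/seteqP; split => x /= [Dx]; last by move=> [q gq bq]; split => //; exact: gq.
  move=> gx; split => //.
  have : nbhs (g x) `]a, b[%classic by apply: open_nbhs_nbhs; split => //; exact: itv_open.
  move=> /(cg x Dx) /nbhs_ballP [e /= e0 xe].
  have [q1] := @rat_in_itvoo R (x.1 - e) x.1 ltac:(lra).
  have [q2] := @rat_in_itvoo R x.1 (x.1 + e) ltac:(lra).
  have [q3] := @rat_in_itvoo R (x.2 - e) x.2 ltac:(lra).
  have [q4] := @rat_in_itvoo R x.2 (x.2 + e) ltac:(lra).
  rewrite !in_itv /= => /andP[h4 h4'] /andP[h3 h3'] /andP[h2 h2'] /andP[h1 h1'].
  exists ((q1, q2), (q3, q4)); last by split; rewrite /= in_itv /=; apply/andP.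
  move=> y [Dy [/= /[!in_itv] /= /andP[y1 y1'] /andP[y2 y2']]]; apply: xe.
  by split; rewrite /ball /= ltr_norml; apply/andP; split; lra.
apply: measurableI => //; rewrite bigcup_mkcond.
apply: countable_bigcupT_measurable; first exact: countableP.
by move=> q; case: ifP => _ //; apply: measurableX; exact: measurable_itv.
Qed.

Lemma continuous_integrable_on_compact (R : realType) (K : set (R * R))
    (A : set (plane R)) (g : R * R -> R) :
  compact K -> measurable A -> A `<=` K -> (forall x, K x -> {for x, continuous g}) ->
  (@leb2 R).-integrable A (EFin \o g).
Proof.
move=> cK mA AK cg; have [B KB] := compact_plane_box cK.
apply: measurable_bounded_integrable => //.
- exact: leb2_bounded_lt_oo mA (fun x Ax => KB x (AK x Ax)).
- exact: plane_continuous_measurable_fun mA (fun x Ax => cg x (AK x Ax)).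
have gK : {within K, continuous g} by apply: continuous_in_subspaceT => x /set_mem /cg.
have /compact_bounded gK_bounded := continuous_compact gK cK.
move: gK_bounded; rewrite /bounded_near /=; apply: filterS => M gKM x Ax.
by apply: gKM; exists x => //; exact: AK.
Qed.

Section ArgminCells.
Variables (R : realType) (T : Type) (N : nat) (Om : set T) (c : 'I_N -> T -> R).

Definition argmin_cell (n : 'I_N) : set T :=
  [set w | Om w /\ forall k : 'I_N,
     ((k < n)%N -> c n w < c k w) /\ ((n < k)%N -> c n w <= c k w)].

Lemma argmin_cell_min n w : argmin_cell n w -> forall k, c n w <= c k w.
Proof.
move=> [_ H] k; case: (ltngtP k n) => [kn|nk|/val_inj ->] //.
- exact/ltW/((H k).1 kn).
- exact: (H k).2 nk.
Qed.

Lemma argmin_cell_disjoint n m : n != m -> argmin_cell n `&` argmin_cell m = set0.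
Proof.
move=> nm; apply/seteqP; split => // w [[_ Hn] [_ Hm]].
case: (ltngtP n m) => [lt_nm|lt_mn|/val_inj eq_nm]; last by rewrite eq_nm eqxx in nm.
- by have := lt_le_trans ((Hm n).1 lt_nm) ((Hn m).2 lt_nm); rewrite ltxx.
- by have := lt_le_trans ((Hn m).1 lt_mn) ((Hm n).2 lt_mn); rewrite ltxx.
Qed.

Lemma argmin_cell_cover : (0 < N)%N -> Om `<=` \bigcup_n argmin_cell n.
Proof.
move=> N0 w Ow.
have [m0 _ m0_min] := @arg_minP _ R _ (Ordinal N0) xpredT (c^~ w) isT.
pose minimizer (i : 'I_N) := [forall j, c i w <= c j w].
have min_m0 : minimizer m0 by apply/forallP => j; exact: m0_min.
have [m /forallP m_min m_first] := arg_minnP (fun i : 'I_N => nat_of_ord i) min_m0.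
exists m => //; split => // k.
split => [km|_]; last exact: m_min.
rewrite ltNge; apply/negP => le_km.
suff /m_first : minimizer k by rewrite leqNgt km.
by apply/forallP => j; exact: le_trans le_km (m_min j).
Qed.

End ArgminCells.

Lemma argmin_cell_measurable d (T : measurableType d) (R : realType) N (Om : set T)
    (c : 'I_N -> T -> R) n :
  measurable Om -> (forall k, measurable_fun setT (c k)) -> measurable (argmin_cell Om c n).
Proof.
move=> mOm mc.
have cmp_meas (cmp : R -> R -> bool) k :
    measurable_fun setT (fun w => cmp (c n w) (c k w)) -> measurable [set w | cmp (c n w) (c k w)].
  by move=> m_cmp; rewrite -[X in measurable X]setTI; exact: m_cmp measurableT [set true] I.
rewrite (_ : argmin_cell Om c n = Om
    `&` \bigcap_(k in [set k : 'I_N | (k < n)%N]) [set w | c n w < c k w]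
    `&` \bigcap_(k in [set k : 'I_N | (n < k)%N]) [set w | c n w <= c k w]).
  apply: measurableI; first apply: measurableI => //.
  - apply: fin_bigcap_measurable; first exact: finite_finset.
    by move=> k _; apply: cmp_meas; exact: measurable_realfun.measurable_fun_ltr.
  - apply: fin_bigcap_measurable; first exact: finite_finset.
    by move=> k _; apply: cmp_meas; exact: measurable_realfun.measurable_fun_ler.
apply/seteqP; split => w /=.
  move=> [Ow H]; split; first split => // k /= kn; first exact: (H k).1.
  by move=> k /= nk; exact: (H k).2.
by move=> [[Ow lt] le]; split => // k; split => [kn|nk]; [exact: lt | exact: le].
Qed.

Section PowerAsIntegral.
Variables (R : realType) (N M : nat) (Om : set (R * R)) (f : R * R -> R) (Rb lam : R)
  (eta rho : 'I_N -> R) (beta s : 'I_N -> node N M -> R) (p : node N M -> R * R).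
Hypotheses (Om_compact : compact Om) (f_cont : forall x, Om x -> {for x, continuous f}).
Hypothesis hs : normalized_flow s.

Lemma continuous_vcost n : continuous (vcost eta beta rho lam p s n).
Proof.
have -> : vcost eta beta rho lam p s n =
    (fun w => eta n * sqd (p (inl n)) w) + cst (lam * gcoef beta rho p s n + lam * rho n).
  by apply/funext => w; rewrite /vcost /= addrA.
move=> x; apply: continuousD; last exact: cst_continuous.
by apply: continuousM; [exact: cst_continuous | exact: continuous_sqd].
Qed.

Lemma integrable_mulf (A : set (plane R)) (u : R * R -> R) :
  measurable A -> A `<=` Om -> continuous u ->
  (@leb2 R).-integrable A (EFin \o (fun w => u w * f w)).
Proof.
move=> mA AOm cu; apply: continuous_integrable_on_compact mA AOm _ => // x Ox.
exact: continuousM (cu x) (f_cont Ox).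
Qed.

Lemma integrable_cost n (A : set (plane R)) : measurable A -> A `<=` Om ->
  (@leb2 R).-integrable A (EFin \o (fun w => vcost eta beta rho lam p s n w * Rb * f w)).
Proof.
move=> mA AOm; apply: (@integrable_mulf _ (fun w => vcost eta beta rho lam p s n w * Rb)) => // w.
apply: (@continuousM _ _ (vcost eta beta rho lam p s n) (cst Rb)); first exact: continuous_vcost.
exact: cst_continuous.
Qed.

Lemma Dpow_cells (X : 'I_N -> set (plane R)) FX :
  (forall n, measurable (X n)) -> (forall n, X n `<=` Om) -> is_flow Rb f X s FX ->
  Dpow Rb f eta beta rho lam p X FX =
  \sum_(n < N) Rintegral (@leb2 R) (X n) (fun w => vcost eta beta rho lam p s n w * Rb * f w).
Proof.
move=> mX XOm [balance split_flow].
rewrite /Dpow (flow_cost_identity hs beta rho p balance split_flow) mulr_sumr -big_split.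
apply: eq_bigr => n _ /=.
pose k := lam * (gcoef beta rho p s n + rho n) * Rb.
rewrite (_ : (fun w => vcost eta beta rho lam p s n w * Rb * f w) =
             fun w => eta n * sqd (p (inl n)) w * Rb * f w + k * f w); last first.
  by apply/funext => w; rewrite /vcost /k; ring.
have int_f : (@leb2 R).-integrable (X n) (EFin \o f).
  exact: continuous_integrable_on_compact Om_compact (mX n) (XOm n) f_cont.
rewrite RintegralD // ?RintegralZl // /vol /k; first by rewrite !mulrA.
- apply: integrable_mulf => // w.
  apply: (@continuousM _ _ (fun w => eta n * sqd (p (inl n)) w) (cst Rb)).
    by apply: continuousM; [exact: cst_continuous | exact: continuous_sqd].
  exact: cst_continuous.
- by apply: (@integrable_mulf _ (cst k)) => // w; exact: cst_continuous.
Qed.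

End PowerAsIntegral.

Unset Implicit Arguments.

Theorem proposition1 (R : realType) (N M : nat) (Om : set (R * R))
  (f : R * R -> R) (Rb : R) (eta : 'I_N -> R) (beta : 'I_N -> node N M -> R)
  (rho : 'I_N -> R) (lam : R) (p : node N M -> R * R)
  (W : 'I_N -> set (plane R)) (s : 'I_N -> node N M -> R)
  (F FV : 'I_N -> node N M -> R) :
  (0 < N)%N -> (0 < M)%N ->
  convex_polygon Om ->
  {within Om, continuous f} ->
  (forall x, Om x -> differentiable f x) ->
  (forall x, Om x -> 0 < f x) ->
  0 < Rb ->
  (forall n, 0 < eta n) ->
  (forall i j, 0 < beta i j) ->
  (forall n, 0 <= rho n) ->
  0 <= lam ->
  (forall n, Om (p n)) ->
  cell_partition Om W ->
  normalized_flow s ->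
  is_flow Rb f W s F ->
  is_flow Rb f (voronoi Om eta beta rho lam p s) s FV ->
  Dpow Rb f eta beta rho lam p (voronoi Om eta beta rho lam p s) FV
    <= Dpow Rb f eta beta rho lam p W F.
Proof.
move=> N0 _ [vs [Om_hull _]] _ f_diff f_pos Rb_pos _ _ _ _ _ [mW [dW W_cover]] hs flow_W flow_V.
have Om_compact : compact Om by rewrite Om_hull; exact: convex_hull_compact.
have f_cont x : Om x -> {for x, continuous f} := fun Ox => differentiable_continuous (f_diff x Ox).
have WOm n : W n `<=` Om by move=> x Wx; apply/W_cover; exists n.
have mOm : measurable (Om : set (plane R)).
  rewrite (_ : Om = \bigcup_n W n); first exact: countable_bigcupT_measurable.
  apply/seteqP; split => x; first by move/W_cover => [n Wx]; exists n.
  by move=> [n _ Wx]; apply/W_cover; exists n.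
have mV n : measurable (voronoi Om eta beta rho lam p s n).
  apply: argmin_cell_measurable mOm _ => k.
  by apply: plane_continuous_measurable_fun => // x _; exact: continuous_vcost.
have cost_integrable := integrable_cost Rb lam eta rho beta s p Om_compact f_cont.
rewrite !(Dpow_cells lam eta rho beta p Om_compact f_cont hs) //; last by move=> n x [].
apply: sum_Rintegral_cells_le => //.
- exact: argmin_cell_disjoint.
- by move=> n x /(WOm n); apply: argmin_cell_cover.
- by move=> m x [/W_cover [n Wx] _]; exists n.
- by move=> n; exact: cost_integrable.
- by move=> m; apply: cost_integrable => // x [].
move=> m w Vw n; have Ow : Om w by case: Vw.
rewrite ler_pM2r ?f_pos // ler_pM2r //.
exact: (argmin_cell_min (c := vcost eta beta rho lam p s) Vw n).
Qed.
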